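(* Every caterpillar with maximum degree at most $5$ is odd prime.
   Context: All graphs are finite and simple. A graph $G$ of order $N$ is odd prime if there is a bijection $\ell:V(G)\to\{1,3,\ldots,2N-1\}$ with $\gcd(\ell(u),\ell(v))=1$ for every edge $uv$. A caterpillar is a tree containing a path $v_1,\ldots,v_n$ (the spine) such that every vertex not on the spine is a leaf adjacent to one of the interior spine vertices $v_2,\ldots,v_{n-1}$. *)

From mathcomp Require Import all_boot.
Set Implicit Arguments. Unset Strict Implicit. Unset Printing Implicit Defensive.

Definition simple_graph (T : finType) (e : rel T) : Prop :=
  symmetric e /\ irreflexive e.

Definition deg (T : finType) (e : rel T) (x : T) : nat := #|[set y | e x y]|.

Definition acyclic (T : finType) (e : rel T) : Prop :=
  forall c : seq T, 3 <= size c -> uniq c -> ~~ cycle e c.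

Definition connected (T : finType) (e : rel T) : Prop :=
  forall x y : T, connect e x y.

Definition is_tree (T : finType) (e : rel T) : Prop :=
  0 < #|T| /\ connected e /\ acyclic e.

(* caterpillar: a tree containing a path v_1,...,v_n (the spine, a sequence of
   distinct vertices with consecutive ones adjacent) such that every vertex not
   on the spine is a leaf adjacent to an interior spine vertex v_2..v_{n-1}
   (0-based indices 1 .. n-2). *)
Definition caterpillar (T : finType) (e : rel T) : Prop :=
  is_tree e /\
  exists (x : T) (p : seq T),
    let s := x :: p in
    [/\ uniq s, path e x p &
      forall v : T, v \notin s ->
        deg e v = 1 /\
        exists i : nat, [/\ 0 < i, i < (size s).-1 & e (nth x s i) v]].

Definition max_degree_at_most (T : finType) (e : rel T) (k : nat) : Prop :=
  forall x : T, deg e x <= k.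

Definition odd_prime (T : finType) (e : rel T) : Prop :=
  exists l : T -> nat,
    [/\ injective l,
        (forall x, odd (l x) && (l x < 2 * #|T|)),
        (forall k, odd k -> k < 2 * #|T| -> exists x, l x = k) &
        (forall u v, e u v -> coprime (l u) (l v))].

(* Label the vertex at position m of a linear ordering of the vertices by 2m + 1.
   Since gcd(2a + 1, 2(a + d) + 1) = gcd(2a + 1, d), an edge is harmless when the
   positions of its ends differ by 1, 2 or 4, or by 3 when the lower one is not 1 mod 3.
   Order the vertices spine vertex by spine vertex, each spine vertex v_k in a block
   with its c_k <= 3 leaves, nbefore_k in {c_k - 1, c_k} of them placed before v_k
   and the others after it.  Leaf edges then have length at most 3 and consecutive
   spine vertices are at most 5 apart; choosing nbefore_(k+1) from the position of
   v_k modulo 3 always keeps all these lengths harmless. *)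

From mathcomp Require Import all_boot zify.
Set Implicit Arguments. Unset Strict Implicit. Unset Printing Implicit Defensive.

Lemma odd_prime_of_ordering (T : finType) (e : rel T) (ord : seq T) :
  uniq ord -> (forall v, v \in ord) ->
  (forall u v, e u v -> coprime (2 * index u ord + 1) (2 * index v ord + 1)) ->
  odd_prime e.
Proof.
move=> uniq_ord ord_full cop_ord.
have size_ord : size ord = #|T|.
  rewrite cardE; apply/perm_size/uniq_perm; rewrite ?enum_uniq // => v.
  by rewrite mem_enum ord_full.
(* The occurrences of [#|T|] differ in an implicit instance; [set] merges them for [lia]. *)
exists (fun v => 2 * index v ord + 1); split => //; set N := #|T| in size_ord *.
- by move=> u v /eqP; rewrite eqn_add2r eqn_pmul2l // => /eqP /index_inj; apply.
- move=> v; rewrite addn1 /= oddM /=.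
  by have := ord_full v; rewrite -index_mem size_ord; lia.
- move=> k odd_k lt_k; have def_k := odd_double_half k; rewrite odd_k -muln2 in def_k.
  have lt_half : k./2 < size ord by rewrite size_ord; lia.
  case: ord uniq_ord lt_half {ord_full cop_ord size_ord} => // v0 ord uniq_ord lt_half.
  by exists (nth v0 (v0 :: ord) k./2); rewrite index_uniq //; lia.
Qed.

Lemma coprime_odd_shift a d : coprime (2 * a + 1) (2 * (a + d) + 1) = coprime (2 * a + 1) d.
Proof.
have -> : 2 * (a + d) + 1 = 2 * d + (2 * a + 1) by lia.
by rewrite /coprime gcdnDr -/(coprime _ _) coprimeMr coprimen2 addn1 /= oddM.
Qed.

Definition safe_gap (a d : nat) : bool :=
  [|| d == 1, d == 2, d == 4 | (d == 3) && (a %% 3 != 1)].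

Lemma coprime_safe_gap a d : safe_gap a d -> coprime (2 * a + 1) (2 * (a + d) + 1).
Proof.
have odd_2 : coprime (2 * a + 1) 2 by rewrite coprimen2 addn1 /= oddM.
rewrite coprime_odd_shift; case/or4P => [/eqP-> | /eqP-> | /eqP-> | /andP[/eqP-> a3]] //.
- exact: coprimen1.
- by rewrite (_ : 4 = 2 * 2) // coprimeMr odd_2.
- by rewrite coprime_sym prime_coprime //; apply/negP => /dvdnP [q]; lia.
Qed.

(* A spine vertex at position [P] followed by [a] of its leaves, then [b] leaves of the
   next spine vertex, which thus lands at [P + (a + b + 1)]; if [b = 3] the first of
   these leaves is 3 below it. *)
Definition admissible (P a b : nat) : bool :=
  safe_gap P (a + b + 1) && ((b == 3) ==> ((P + (a + b + 1)) %% 3 != 1)).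

Lemma admissible_mod3 P a b : admissible P a b = admissible (P %% 3) a b.
Proof. by rewrite /admissible /safe_gap modn_mod modnDml. Qed.

Lemma admissible_choice P a c :
  a <= 1 -> c <= 3 -> admissible P a c || admissible P a c.-1.
Proof.
rewrite !(admissible_mod3 P); have : P %% 3 < 3 by rewrite ltn_mod.
by case: (P %% 3) => [|[|[|]]] //; case: a => [|[|]] //; case: c => [|[|[|[|]]]].
Qed.

Section BlockPositions.

Variable c : nat -> nat.
Hypothesis c_le3 : forall k, c k <= 3.

Definition block_start k := sumn [seq (c i).+1 | i <- iota 0 k].

Fixpoint nbefore k :=
  if k is k'.+1 then
    let P := block_start k' + nbefore k' in
    if admissible P (c k' - nbefore k') (c k) then c k else (c k).-1
  else c 0.

Definition spine_pos k := block_start k + nbefore k.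

Definition leaf_pos k j := block_start k + bump (nbefore k) j.

Lemma block_start_succ k : block_start k.+1 = block_start k + (c k).+1.
Proof. by rewrite /block_start -addn1 iotaD map_cat sumn_cat /= addn0. Qed.

Lemma nbefore_bounds k : nbefore k <= c k <= (nbefore k).+1.
Proof. by case: k => [|k] /=; [rewrite leqnn leqnSn | case: ifP => _; lia]. Qed.

Lemma nbefore_admissible k : admissible (spine_pos k) (c k - nbefore k) (nbefore k.+1).
Proof.
rewrite /= -/(spine_pos k); case: ifP => // not_adm.
have := @admissible_choice (spine_pos k) (c k - nbefore k) (c k.+1).
by rewrite not_adm; apply => //; have := nbefore_bounds k; lia.
Qed.

Lemma spine_pos_succ k :
  spine_pos k.+1 = spine_pos k + (c k - nbefore k + nbefore k.+1 + 1).
Proof. by rewrite /spine_pos block_start_succ; have := nbefore_bounds k; lia. Qed.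

Lemma coprime_spine_pos k : coprime (2 * spine_pos k + 1) (2 * spine_pos k.+1 + 1).
Proof.
by rewrite spine_pos_succ; apply: coprime_safe_gap; case/andP: (nbefore_admissible k).
Qed.

Lemma spine_pos_mod3 k : nbefore k = 3 -> spine_pos k %% 3 != 1.
Proof.
case: k => [|k] nb3; first by rewrite /spine_pos nb3.
by have /andP[_] := nbefore_admissible k; rewrite spine_pos_succ nb3.
Qed.

Lemma coprime_leaf_pos k j :
  j < c k -> coprime (2 * leaf_pos k j + 1) (2 * spine_pos k + 1).
Proof.
move=> lt_j_c; have := nbefore_bounds k; rewrite /leaf_pos /spine_pos /bump.
case: (leqP (nbefore k) j) => [le_nb_j | lt_j_nb] /= bounds.
  rewrite coprime_sym (_ : _ + (1 + j) = block_start k + nbefore k + 1); last by lia.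
  by apply: coprime_safe_gap.
rewrite add0n [X in coprime _ (2 * X + 1)](_ : _ = block_start k + j + (nbefore k - j));
  last by lia.
apply: coprime_safe_gap; have := @spine_pos_mod3 k; have := c_le3 k.
by rewrite /safe_gap /spine_pos; lia.
Qed.

End BlockPositions.

Lemma uniq_flatten_map (I T : eqType) (f : I -> seq T) (tag : T -> I) (r : seq I) :
  uniq r -> (forall i, i \in r -> uniq (f i)) ->
  (forall i w, i \in r -> w \in f i -> tag w = i) ->
  uniq (flatten [seq f i | i <- r]).
Proof.
elim: r => //= i r IH /andP[i_r uniq_r] uniq_f tag_f.
have sub_r j : j \in r -> j \in i :: r by rewrite inE => ->; rewrite orbT.
rewrite cat_uniq uniq_f ?mem_head //= IH // => [|j /sub_r|j w /sub_r]; last 2 first.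
- exact: uniq_f.
- exact: tag_f.
rewrite andbT; apply/hasPn => w /flatten_mapP[j j_r w_fj]; apply/negP => w_fi.
by move: i_r; rewrite -(tag_f i w) ?mem_head // (tag_f j w) ?sub_r ?j_r.
Qed.

Lemma index_flatten_iota (T : eqType) (f : nat -> seq T) n k y :
  uniq (flatten [seq f i | i <- iota 0 n]) -> k < n -> y \in f k ->
  index y (flatten [seq f i | i <- iota 0 n]) =
    sumn [seq size (f i) | i <- iota 0 k] + index y (f k).
Proof.
move=> + lt_k y_fk.
rewrite -(subnKC (ltnW lt_k)) iotaD -(subnSK lt_k) map_cat flatten_cat /=.
rewrite cat_uniq => /and3P[_ /hasPn y_A _].
rewrite index_cat (negbTE (y_A y _)) ?mem_cat ?y_fk // index_cat y_fk.
by rewrite size_flatten /shape -map_comp.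
Qed.

Lemma nth_insert_at (T : Type) (x0 y : T) (r : seq T) b :
  b <= size r -> nth x0 (take b r ++ y :: drop b r) b = y.
Proof. by move=> le_b; rewrite nth_cat size_takel // ltnn subnn. Qed.

Lemma nth_insert_bump (T : Type) (x0 y : T) (r : seq T) b j :
  b <= size r -> nth x0 (take b r ++ y :: drop b r) (bump b j) = nth x0 r j.
Proof.
move=> le_b; rewrite nth_cat size_takel // /bump.
case: (leqP b j) => [le_bj | lt_jb] /=; last by rewrite lt_jb nth_take.
by rewrite ltnNge (leq_trans le_bj) // add1n subSn //= nth_drop subnKC.
Qed.

Section Caterpillar.

Variables (T : finType) (e : rel T) (x : T) (p : seq T).

Local Notation s := (x :: p).
Local Notation n := (size (x :: p)).
Local Notation sp i := (nth x (x :: p) i).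

Hypotheses (e_sym : symmetric e) (e_irr : irreflexive e) (e_acyclic : acyclic e)
  (uniq_s : uniq s) (path_s : path e x p)
  (leaf_attached : forall v, v \notin s ->
     deg e v = 1 /\ exists i, [/\ 0 < i, i < n.-1 & e (sp i) v])
  (deg_le5 : max_degree_at_most e 5).

Lemma spine_edge k : k.+1 < n -> e (sp k) (sp k.+1).
Proof. by move=> lt_k; move/(pathP x): path_s; apply. Qed.

Lemma no_chord i j : i.+1 < j -> j < n -> ~~ e (sp i) (sp j).
Proof.
move=> lt_ij lt_j; apply/negP => e_ij.
set c := drop i (take j.+1 s).
have size_c : size c = j.+1 - i by rewrite size_drop size_takel.
have c_def : c = sp i :: drop i.+1 (take j.+1 s).
  by rewrite /c (drop_nth x) ?nth_take ?size_takel //; lia.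
have last_c : last x c = sp j.
  by rewrite -nth_last size_c nth_drop nth_take; [congr nth; lia | lia].
have sorted_c : sorted e c.
  have : sorted e s := path_s.
  by rewrite -(cat_take_drop j.+1 s) -(cat_take_drop i (take j.+1 s)) -/c
    => /cat_sorted2[/cat_sorted2[]].
have cycle_c : cycle e c.
  by move: sorted_c; rewrite (cycle_path x) last_c c_def /= e_sym e_ij.
have size_c3 : 3 <= size c by rewrite size_c; lia.
by have := e_acyclic size_c3 (drop_uniq _ (take_uniq _ uniq_s)); rewrite cycle_c.
Qed.

Lemma spine_adjacent i j :
  i < n -> j < n -> e (sp i) (sp j) -> (j == i.+1) || (i == j.+1).
Proof.
move=> lt_i lt_j e_ij; case: (ltngtP i j) => [lt_ij | lt_ji | eq_ij].
- suff : ~~ (i.+1 < j) by lia.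
  by apply: contraL e_ij => lt_Sij; exact: no_chord.
- suff : ~~ (j.+1 < i) by lia.
  by rewrite e_sym in e_ij; apply: contraL e_ij => lt_Sji; exact: no_chord.
- by rewrite eq_ij e_irr in e_ij.
Qed.

Definition host v := find (fun u => e u v) s.

Lemma host_spec v : v \notin s ->
  [/\ 0 < host v, (host v).+1 < n & forall w, e v w = (w == sp (host v))].
Proof.
move=> v_s; have [deg1 [i [i_gt0 + e_iv]]] := leaf_attached v_s.
rewrite ltn_predRL => lt_Si; have lt_i := ltnW lt_Si.
have [y N_v] : exists y, [set w | e v w] = [set y] by apply/cards1P; rewrite -deg1.
have e_v w : e v w = (w == y) by rewrite -in_set1 -N_v inE.
have has_v : has (fun u => e u v) s by apply/hasP; exists (sp i); rewrite ?mem_nth.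
have host_lt : host v < n by rewrite -has_find.
have sp_host : sp (host v) = y.
  by apply/eqP; rewrite -e_v e_sym; exact: (nth_find x has_v).
have host_i : host v = i.
  by apply/eqP; rewrite -(nth_uniq x host_lt lt_i uniq_s) sp_host eq_sym -e_v e_sym.
by rewrite host_i in sp_host *; split => // w; rewrite e_v sp_host.
Qed.

Definition leaves k := [seq w <- enum T | (w \notin s) && (host w == k)].

Definition nleaves k := size (leaves k).

Lemma mem_leaves k w : (w \in leaves k) = (w \notin s) && (host w == k).
Proof. by rewrite mem_filter mem_enum andbT. Qed.

Lemma uniq_leaves k : uniq (leaves k).
Proof. exact/filter_uniq/enum_uniq. Qed.

Lemma spine_notin_leaves i k : i < n -> sp i \notin leaves k.
Proof. by move=> lt_i; rewrite mem_leaves mem_nth. Qed.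

Lemma nleaves_le3 k : nleaves k <= 3.
Proof.
rewrite /nleaves; case E: (leaves k) => [|w l] //; rewrite -E.
have : w \in leaves k by rewrite E mem_head.
rewrite mem_leaves => /andP[w_s /eqP host_w].
have [k_gt0 k_lt _] := host_spec w_s; rewrite host_w in k_gt0 k_lt.
pose N := sp k.-1 :: sp k.+1 :: leaves k.
have uniq_N : uniq N.
  rewrite /N !cons_uniq !inE negb_or uniq_leaves !spine_notin_leaves ?andbT //; try lia.
  by rewrite nth_uniq //; [apply/eqP; lia | exact: leq_ltn_trans (leq_pred k) (ltnW k_lt)].
have N_sub : N \subset [set y | e (sp k) y].
  apply/subsetP => y; rewrite inE !inE => /or3P[/eqP-> | /eqP-> | y_L].
  - by rewrite e_sym -{2}(prednK k_gt0) spine_edge // prednK // ltnW.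
  - by rewrite spine_edge.
  - move: y_L; rewrite mem_leaves e_sym => /andP[y_s /eqP host_y].
    by have [_ _ ->] := host_spec y_s; rewrite host_y.
have := subset_leq_card N_sub.
by rewrite (card_uniqP uniq_N) /=; have := deg_le5 (sp k); rewrite /deg; lia.
Qed.

Definition block k :=
  take (nbefore nleaves k) (leaves k) ++ sp k :: drop (nbefore nleaves k) (leaves k).

Definition ordering := flatten [seq block k | k <- iota 0 n].

Lemma nbefore_le k : nbefore nleaves k <= nleaves k.
Proof. by case/andP: (nbefore_bounds nleaves k). Qed.

Lemma perm_block k : perm_eq (block k) (sp k :: leaves k).
Proof. by rewrite /block -cat1s perm_catCA /= cat_take_drop. Qed.

Lemma uniq_block k : k < n -> uniq (block k).
Proof.
by move=> lt_k; rewrite (perm_uniq (perm_block k)) /= spine_notin_leaves ?uniq_leaves.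
Qed.

Lemma uniq_ordering : uniq ordering.
Proof.
apply: (uniq_flatten_map (tag := fun w => if w \in s then index w s else host w)).
- exact: iota_uniq.
- by move=> k; rewrite mem_iota => /uniq_block.
move=> k w; rewrite mem_iota (perm_mem (perm_block k)) inE => lt_k /orP[/eqP-> | w_L].
  by rewrite mem_nth // index_uniq.
by move: w_L; rewrite mem_leaves => /andP[/negbTE-> /eqP].
Qed.

Lemma mem_ordering v : v \in ordering.
Proof.
apply/flatten_mapP; case: (boolP (v \in s)) => v_s.
  exists (index v s); first by rewrite mem_iota add0n index_mem.
  by rewrite (perm_mem (perm_block _)) nth_index ?mem_head.
have [_ lt_host _] := host_spec v_s.
exists (host v); first by rewrite mem_iota; lia.
by rewrite (perm_mem (perm_block _)) inE mem_leaves v_s eqxx orbT.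
Qed.

Lemma index_ordering_block k o : k < n -> o <= nleaves k ->
  index (nth x (block k) o) ordering = block_start nleaves k + o.
Proof.
move=> lt_k le_o; have lt_o : o < size (block k) by rewrite (perm_size (perm_block k)).
rewrite /ordering (index_flatten_iota uniq_ordering lt_k) ?mem_nth //.
rewrite index_uniq ?uniq_block //; congr (_ + _); congr sumn.
by apply: eq_map => i; rewrite (perm_size (perm_block i)).
Qed.

Lemma index_ordering_spine k : k < n ->
  index (sp k) ordering = spine_pos nleaves k.
Proof.
move=> lt_k.
by rewrite /spine_pos -index_ordering_block ?nbefore_le // nth_insert_at ?nbefore_le.
Qed.

Lemma index_ordering_leaf v : v \notin s ->
  index v ordering = leaf_pos nleaves (host v) (index v (leaves (host v))).
Proof.
move=> v_s; have [_ lt_host _] := host_spec v_s.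
have v_L : v \in leaves (host v) by rewrite mem_leaves v_s eqxx.
rewrite /leaf_pos -index_ordering_block ?nth_insert_bump ?nbefore_le ?nth_index //.
  by lia.
have := nbefore_bounds nleaves (host v); rewrite -index_mem -/(nleaves _) in v_L.
by rewrite /bump; case: leqP; lia.
Qed.

Lemma coprime_index_ordering u w : e u w ->
  coprime (2 * index u ordering + 1) (2 * index w ordering + 1).
Proof.
have leaf_case u' w' : u' \notin s -> e u' w' ->
    coprime (2 * index u' ordering + 1) (2 * index w' ordering + 1).
  move=> u_s; have [_ lt_host ->] := host_spec u_s; move/eqP->.
  rewrite index_ordering_leaf // index_ordering_spine; last by lia.
  apply: coprime_leaf_pos => [k|]; first exact: nleaves_le3.
  by rewrite index_mem mem_leaves u_s eqxx.
have spine_case i : i.+1 < n ->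
    coprime (2 * index (sp i) ordering + 1) (2 * index (sp i.+1) ordering + 1).
  move=> lt_Si; rewrite !index_ordering_spine ?(ltnW lt_Si) //.
  by apply: coprime_spine_pos => k; exact: nleaves_le3.
move=> e_uw; case: (boolP (u \in s)) => u_s; last exact: leaf_case.
case: (boolP (w \in s)) => w_s; last by rewrite coprime_sym leaf_case // e_sym.
move: e_uw; rewrite -(nth_index x u_s) -(nth_index x w_s) => e_uw.
have lt_u : index u s < n by rewrite index_mem.
have lt_w : index w s < n by rewrite index_mem.
case/orP: (spine_adjacent lt_u lt_w e_uw) => /eqP E.
  by move: lt_w; rewrite E; exact: spine_case.
by move: lt_u; rewrite E coprime_sym; exact: spine_case.
Qed.

Lemma caterpillar_odd_prime : odd_prime e.
Proof.
exact: odd_prime_of_ordering uniq_ordering mem_ordering coprime_index_ordering.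
Qed.

End Caterpillar.

Theorem theorem4p4 (T : finType) (e : rel T) :
  simple_graph e -> caterpillar e -> max_degree_at_most e 5 -> odd_prime e.
Proof.
move=> [e_sym e_irr] [[_ [_ e_acyclic]] [x [p [uniq_s path_s leaf_attached]]]] deg_le5.
exact: caterpillar_odd_prime e_sym e_irr e_acyclic uniq_s path_s leaf_attached deg_le5.
Qed.
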